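(* Let $f_1,f_2$ be the circle rotations by angles $\alpha,\beta\in\mathbb{R}\setminus\mathbb{Q}$ respectively, with $\beta-\alpha\in\mathbb{Q}$. Let $\mathscr{F}=\{f_1,f_2\}$ and $\Phi=\tau\ltimes\mathscr{F}$ on $\Sigma_2\times\mathbb{S}^1$. Then (1) $\mathscr{F}$ is minimal; (2) $\mathbb{S}^1$ is not a strict attractor of $\mathscr{F}$; (3) the strong unstable foliation $\mathcal{F}^{uu}(\Phi)$ is not minimal.
   Context: $\mathbb{S}^1=\mathbb{R}/\mathbb{Z}$. $\mathscr{F}$ is minimal if $\{h(x):h\in\langle\mathscr{F}\rangle^+\}$ is dense for every $x$ ($\langle\mathscr{F}\rangle^+$ = semigroup of finite compositions). $\mathbb{S}^1$ is a strict attractor of $\mathscr{F}$ if $F^n(S)\to\mathbb{S}^1$ in the Hausdorff metric for every nonempty compact $S$, where $F(A)=f_1(A)\cup f_2(A)$. $\Sigma_2=\{1,2\}^{\mathbb{Z}}$ with metric $\nu^m$, $m=\min\{i\geq0:\omega_i\ne\omega'_i\text{ or }\omega_{-i}\ne\omega'_{-i}\}$, $0<\nu<1$; $\tau$ the shift; $\Phi(\omega,x)=(\tau\omega,f_{\omega_0}(x))$. $W^u_{loc}(\omega)=\{\omega':\omega'_i=\omega_i\ \forall i<0\}$, $W^{uu}(\omega,x)=\bigcup_{n\geq0}\Phi^n(W^u_{loc}(\tau^{-n}\omega)\times\{\pi(\Phi^{-n}(\omega,x))\})$ with $\pi$ the projection to $\mathbb{S}^1$; $\mathcal{F}^{uu}(\Phi)$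 is minimal if every such leaf is dense in $\Sigma_2\times\mathbb{S}^1$. *)

From Stdlib Require Import Reals Lra ZArith List ClassicalEpsilon.
Open Scope R_scope.

(* ---------- The circle S^1 = R/Z, points represented by real lifts ---------- *)

Definition circ_eq (x y : R) : Prop := exists k : Z, x = y + IZR k.

(* the quotient metric on R/Z: distance to the nearest integer of x - y *)
Definition cdist (x y : R) : R :=
  Rmin (frac_part (x - y)) (1 - frac_part (x - y)).

(* subsets of S^1 are represented by Z-saturated subsets of R *)
Definition circ_set (A : R -> Prop) : Prop :=
  forall x (k : Z), A x -> A (x + IZR k).

(* compactness of a subset of S^1 (sequential compactness in the metric cdist) *)
Definition circ_compact (A : R -> Prop) : Prop :=
  forall u : nat -> R, (forall n, A (u n)) ->
    exists (phi : nat -> nat) (y : R),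
      (forall n, (phi n < phi (S n))%nat) /\ A y /\
      (forall eps, 0 < eps -> exists N, forall n, (N <= n)%nat ->
         cdist (u (phi n)) y < eps).

Definition circ_dense (A : R -> Prop) : Prop :=
  forall y eps, 0 < eps -> exists x, A x /\ cdist x y < eps.

Definition hausdorff_lt (A B : R -> Prop) (eps : R) : Prop :=
  (forall x, A x -> exists y, B y /\ cdist x y < eps) /\
  (forall y, B y -> exists x, A x /\ cdist x y < eps).

Definition circT : R -> Prop := fun _ => True.

Definition is_rational (r : R) : Prop :=
  exists (p q : Z), q <> 0%Z /\ r = IZR p / IZR q.

Inductive sym : Type := one | two.

Definition rot (a x : R) : R := x + a.

Definition fam (alpha beta : R) (s : sym) : R -> R :=
  match s with one => rot alpha | two => rot beta end.
Definition fam_inv (alpha beta : R) (s : sym) : R -> R :=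
  match s with one => rot (- alpha) | two => rot (- beta) end.

Definition word_apply (F : sym -> R -> R) (w : list sym) (x : R) : R :=
  fold_right (fun s y => F s y) x w.

Definition semigroup_orbit (F : sym -> R -> R) (x : R) : R -> Prop :=
  fun y => exists w : list sym, w <> nil /\ y = word_apply F w x.

Definition IFS_minimal (F : sym -> R -> R) : Prop :=
  forall x, circ_dense (semigroup_orbit F x).

Definition hutch (F : sym -> R -> R) (A : R -> Prop) : R -> Prop :=
  fun y => exists s x, A x /\ circ_eq y (F s x).

Definition strict_attractor (F : sym -> R -> R) : Prop :=
  forall S : R -> Prop, circ_set S -> (exists x, S x) -> circ_compact S ->
    forall eps, 0 < eps -> exists N : nat, forall n, (N <= n)%nat ->
      hausdorff_lt (Nat.iter n (hutch F) S) circT eps.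

Definition Sigma2 : Type := Z -> sym.

Definition differ_at (w w' : Sigma2) (m : nat) : Prop :=
  w (Z.of_nat m) <> w' (Z.of_nat m) \/ w (- Z.of_nat m)%Z <> w' (- Z.of_nat m)%Z.

(* d(w,w') = nu^m, m = min{i >= 0 : w_i <> w'_i or w_{-i} <> w'_{-i}}; 0 if w = w' *)
Definition sdist (nu : R) (w w' : Sigma2) : R :=
  match excluded_middle_informative (exists m, differ_at w w' m) with
  | left _ => nu ^ (epsilon (inhabits 0%nat)
                      (fun m => differ_at w w' m /\
                                forall k, (k < m)%nat -> ~ differ_at w w' k))
  | right _ => 0
  end.

Definition tau (w : Sigma2) : Sigma2 := fun i => w (i + 1)%Z.
Definition tau_inv (w : Sigma2) : Sigma2 := fun i => w (i - 1)%Z.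

Definition Phi (alpha beta : R) (p : Sigma2 * R) : Sigma2 * R :=
  (tau (fst p), fam alpha beta (fst p 0%Z) (snd p)).
Definition Phi_inv (alpha beta : R) (p : Sigma2 * R) : Sigma2 * R :=
  (tau_inv (fst p), fam_inv alpha beta (fst p (-1)%Z) (snd p)).

Definition Wu_loc (w : Sigma2) : Sigma2 -> Prop :=
  fun w' => forall i : Z, (i < 0)%Z -> w' i = w i.

Definition Wuu (alpha beta : R) (p : Sigma2 * R) : Sigma2 * R -> Prop :=
  fun q => exists (n : nat) (w' : Sigma2),
    Wu_loc (Nat.iter n tau_inv (fst p)) w' /\
    q = Nat.iter n (Phi alpha beta)
          (w', snd (Nat.iter n (Phi_inv alpha beta) p)).

(* density in Sigma2 x S^1 (max of the two metrics) *)
Definition prod_dense (nu : R) (A : Sigma2 * R -> Prop) : Prop :=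
  forall (w : Sigma2) (y eps : R), 0 < eps ->
    exists q, A q /\ sdist nu (fst q) w < eps /\ cdist (snd q) y < eps.

Definition uu_minimal (nu alpha beta : R) : Prop :=
  forall p : Sigma2 * R, prod_dense nu (Wuu alpha beta p).

From Stdlib Require Import Reals Lra Lia ZArith List Classical.
Open Scope R_scope.

(* Every map involved is a rotation by alpha or by beta, so after n steps a
   point has moved by  n*alpha + k*(beta - alpha)  for some integer k.
   (1) Minimality: already the powers of f_1 give a dense orbit, because
       alpha is irrational; this is Dirichlet's approximation theorem
       (proved by pigeonhole) followed by walking along multiples of a small
       rotation.
   (2),(3) Non-attraction and non-minimality: write beta - alpha = P/Q.  The
       points reachable after n steps lie in the coset n*alpha + (1/Q)Z of
       the circle, which stays at distance >= 1/(2Q) from the point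
       n*alpha + 1/(2Q).  For (2) start the Hutchinson iteration at {0}; for
       (3) the leaf of (w,0) consists of points whose circle coordinate is a
       pure combination k*(beta - alpha), hence misses 1/(2Q). *)

Lemma Int_part_bounds (r : R) : IZR (Int_part r) <= r < IZR (Int_part r) + 1.
Proof. destruct (base_Int_part r); lra. Qed.

Lemma cdist_le_lift (x y : R) (m : Z) : cdist x y <= Rabs (x - y - IZR m).
Proof.
  unfold cdist, frac_part. set (d := x - y).
  destruct (Int_part_bounds d) as [Hlo Hhi].
  destruct (Z.le_gt_cases m (Int_part d)) as [Hm | Hm].
  - apply IZR_le in Hm.
    apply Rle_trans with (d - IZR (Int_part d)); [apply Rmin_l |].
    rewrite Rabs_right; lra.
  - assert (IZR (Int_part d) + 1 <= IZR m).
    { rewrite <- plus_IZR. apply IZR_le. lia. }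
    apply Rle_trans with (1 - (d - IZR (Int_part d))); [apply Rmin_r |].
    rewrite Rabs_left1; lra.
Qed.

Lemma cdist_ge_odd_multiple (x y : R) (Q j : Z) : (0 < Q)%Z ->
  (x - y) * (2 * IZR Q) = IZR (2 * j + 1) -> / (2 * IZR Q) <= cdist x y.
Proof.
  intros HQ Heq. unfold cdist, frac_part. set (d := x - y) in *.
  destruct (Int_part_bounds d) as [Hlo Hhi]. set (z := Int_part d) in *.
  assert (HQr : 0 < IZR Q) by (apply IZR_lt; lia).
  (* the scaled fractional part is an odd integer strictly between 0 and 2Q *)
  set (r := (2 * j + 1 - 2 * Q * z)%Z).
  assert (Hr : IZR r = (d - IZR z) * (2 * IZR Q)).
  { unfold r. rewrite minus_IZR, <- Heq, !mult_IZR. simpl (IZR 2). ring. }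
  assert (Hr_lo : (0 <= r)%Z) by (apply le_IZR; rewrite Hr; nra).
  assert (Hr_hi : (r < 2 * Q)%Z) by (apply lt_IZR; rewrite Hr, mult_IZR; simpl (IZR 2); nra).
  assert (Hodd_lo : (1 <= r)%Z) by (unfold r in *; lia).
  assert (Hodd_hi : (r <= 2 * Q - 1)%Z) by (unfold r in *; lia).
  apply IZR_le in Hodd_lo. apply IZR_le in Hodd_hi.
  rewrite Hr in Hodd_lo, Hodd_hi. rewrite minus_IZR, mult_IZR in Hodd_hi.
  simpl (IZR 2) in *.
  assert (Hinv : / (2 * IZR Q) * (2 * IZR Q) = 1) by (field; lra).
  apply Rmin_glb; apply Rmult_le_reg_r with (2 * IZR Q); try lra;
    rewrite Hinv; nra.
Qed.

Lemma rational_pos_denominator (r : R) :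
  is_rational r -> exists P Q : Z, (0 < Q)%Z /\ r = IZR P / IZR Q.
Proof.
  intros [p [q [Hq ->]]]. exists (p * q)%Z, (q * q)%Z. split; [nia |].
  rewrite !mult_IZR. field. apply eq_IZR_contrapositive; auto.
Qed.

Lemma coset_avoids_midpoint (x : R) (P Q k m : Z) : (0 < Q)%Z ->
  / (2 * IZR Q) <= cdist (x + IZR k * (IZR P / IZR Q) + IZR m) (x + / (2 * IZR Q)).
Proof.
  intros HQ. apply cdist_ge_odd_multiple with (j := (k * P + m * Q - 1)%Z); auto.
  assert (IZR Q <> 0) by (apply eq_IZR_contrapositive; lia).
  rewrite plus_IZR, mult_IZR, minus_IZR, plus_IZR, !mult_IZR. simpl (IZR 2).
  field. auto.
Qed.

Lemma fam_rotation (a b : R) (s : sym) (x : R) :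
  fam a b s x = x + a \/ fam a b s x = x + b.
Proof. destruct s; [left | right]; reflexivity. Qed.

Lemma fam_inv_rotation (a b : R) (s : sym) (x : R) :
  fam_inv a b s x = x + - a \/ fam_inv a b s x = x + - b.
Proof. destruct s; [left | right]; reflexivity. Qed.

Lemma iter_two_rotations {X : Type} (step : X -> X) (pos : X -> R) (c d : R) :
  (forall q, pos (step q) = pos q + c \/ pos (step q) = pos q + d) ->
  forall (n : nat) (p : X),
    exists k : Z, pos (Nat.iter n step p) = pos p + INR n * c + IZR k * (d - c).
Proof.
  intros Hstep n p. induction n as [| n [k Hk]].
  - exists 0%Z. simpl. ring.
  - simpl Nat.iter. rewrite S_INR.
    destruct (Hstep (Nat.iter n step p)) as [Hc | Hd]; rewrite ?Hc, ?Hd, Hk.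
    + exists k. ring.
    + exists (k + 1)%Z. rewrite plus_IZR. ring.
Qed.

Lemma hutch_iter_coset (a b : R) (S : R -> Prop) (x0 : R) (n : nat) (y : R) :
  (forall v, S v -> circ_eq v x0) ->
  Nat.iter n (hutch (fam a b)) S y ->
  exists k m : Z, y = x0 + INR n * a + IZR k * (b - a) + IZR m.
Proof.
  intros HS. revert y. induction n as [| n IHn]; intros y Hy.
  - destruct (HS y Hy) as [m Hm]. exists 0%Z, m. simpl. lra.
  - destruct Hy as [s [v [Hv [m' Hm']]]].
    destruct (IHn v Hv) as [k [m ->]]. rewrite S_INR.
    destruct (fam_rotation a b s (x0 + INR n * a + IZR k * (b - a) + IZR m))
      as [Hs | Hs]; rewrite Hs in Hm'.
    + exists k, (m + m')%Z. rewrite plus_IZR. lra.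
    + exists (k + 1)%Z, (m + m')%Z. rewrite !plus_IZR. simpl (IZR 1). lra.
Qed.

(* Part (2): the Hutchinson iterates of {0} never come 1/(2Q)-close to the
   point n*alpha + 1/(2Q), so they do not converge to the whole circle. *)
Lemma not_strict_attractor (a b : R) :
  is_rational (b - a) -> ~ strict_attractor (fam a b).
Proof.
  intros Hrat Hattr. destruct (rational_pos_denominator _ Hrat) as [P [Q [HQ HPQ]]].
  assert (HQr : 0 < IZR Q) by (apply IZR_lt; lia).
  set (S := fun v => circ_eq v 0).
  assert (HS_set : circ_set S).
  { intros v k [m ->]. exists (m + k)%Z. rewrite plus_IZR. lra. }
  assert (HS_compact : circ_compact S).
  { intros u Hu. exists (fun n => n), 0. repeat split; [intros; lia | exists 0%Z; lra |].
    intros eps Heps. exists 0%nat. intros n _. destruct (Hu n) as [k Hk].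
    eapply Rle_lt_trans; [apply (cdist_le_lift _ _ k) |].
    rewrite Hk. replace (0 + IZR k - 0 - IZR k) with 0 by ring. rewrite Rabs_R0. lra. }
  assert (HS_nonempty : exists x, S x) by (exists 0, 0%Z; lra).
  destruct (Hattr S HS_set HS_nonempty HS_compact (/ (2 * IZR Q))) as [N HN].
  { apply Rinv_0_lt_compat. lra. }
  destruct (HN N (le_n _)) as [_ Hcover].
  destruct (Hcover (INR N * a + / (2 * IZR Q)) I) as [v [Hv Hclose]].
  destruct (hutch_iter_coset a b S 0 N v (fun v h => h) Hv) as [k [m ->]].
  pose proof (coset_avoids_midpoint (INR N * a) P Q k m HQ) as Hfar.
  rewrite HPQ, Rplus_0_l in Hclose. lra.
Qed.

(* Part (3): every point of the leaf through (w,0) has circle coordinate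
   k*(beta - alpha), which stays 1/(2Q)-far from 1/(2Q). *)
Lemma not_uu_minimal (a b : R) :
  is_rational (b - a) -> forall nu : R, 0 < nu < 1 -> ~ uu_minimal nu a b.
Proof.
  intros Hrat nu _ Hmin. destruct (rational_pos_denominator _ Hrat) as [P [Q [HQ HPQ]]].
  assert (HQr : 0 < IZR Q) by (apply IZR_lt; lia).
  set (w0 := fun _ : Z => one).
  destruct (Hmin (w0, 0) w0 (0 + / (2 * IZR Q)) (/ (2 * IZR Q)))
    as [q [[n [w' [_ ->]]] [_ Hclose]]].
  { apply Rinv_0_lt_compat. lra. }
  destruct (iter_two_rotations (Phi_inv a b) snd (- a) (- b)
              (fun q => fam_inv_rotation a b _ _) n (w0, 0)) as [k1 Hk1].
  destruct (iter_two_rotations (Phi a b) snd a b (fun q => fam_rotation a b _ _) n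
              (w', snd (Nat.iter n (Phi_inv a b) (w0, 0)))) as [k2 Hk2].
  rewrite Hk2 in Hclose. simpl snd in Hclose. rewrite Hk1 in Hclose. simpl snd in Hclose.
  pose proof (coset_avoids_midpoint 0 P Q (k2 - k1) 0 HQ) as Hfar.
  rewrite minus_IZR, <- HPQ in Hfar.
  replace (0 + INR n * - a + IZR k1 * (- b - - a) + INR n * a + IZR k2 * (b - a))
    with (0 + (IZR k2 - IZR k1) * (b - a) + IZR 0) in Hclose by (simpl; ring).
  lra.
Qed.

Lemma pigeonhole_unit_interval (t : nat -> R) (K : nat) : (0 < K)%nat ->
  (forall i, 0 <= t i < 1) ->
  exists i j, (i < j <= K)%nat /\ Rabs (t j - t i) < / INR K.
Proof.
  intros HK Ht. assert (HKr : 0 < INR K) by (apply lt_0_INR; lia).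
  (* the box of width 1/K containing t i *)
  set (box := fun i => Int_part (INR K * t i)).
  assert (Hbox : forall i, (0 <= box i < Z.of_nat K)%Z).
  { intro i. destruct (Int_part_bounds (INR K * t i)) as [Hlo Hhi].
    specialize (Ht i). split.
    - assert (-1 < box i)%Z by (apply lt_IZR; unfold box; simpl (IZR (-1)); nra). lia.
    - apply lt_IZR. rewrite <- INR_IZR_INZ. unfold box. nra. }
  assert (Hshare : exists i j, (i < j <= K)%nat /\ box i = box j).
  { apply NNPP. intro Hno.
    set (b := fun i => Z.to_nat (box i)).
    assert (Hinj : NoDup (map b (seq 0 (S K)))).
    { apply NoDup_map_NoDup_ForallPairs; [| apply seq_NoDup].
      intros i j Hi Hj Hb. apply in_seq in Hi. apply in_seq in Hj.
      assert (box i = box j) by (unfold b in Hb; pose proof (Hbox i); pose proof (Hbox j); lia).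
      destruct (Nat.lt_trichotomy i j) as [Hl | [Hl | Hl]]; auto; exfalso; apply Hno.
      - exists i, j. split; [lia | auto].
      - exists j, i. split; [lia | auto]. }
    assert (Hincl : incl (map b (seq 0 (S K))) (seq 0 K)).
    { intros c Hc. apply in_map_iff in Hc. destruct Hc as [i [<- _]].
      apply in_seq. specialize (Hbox i). unfold b. lia. }
    pose proof (NoDup_incl_length Hinj Hincl) as Hlen.
    rewrite length_map, !length_seq in Hlen. lia. }
  destruct Hshare as [i [j [Hij Hsame]]]. exists i, j. split; [exact Hij |].
  destruct (Int_part_bounds (INR K * t i)). destruct (Int_part_bounds (INR K * t j)).
  fold (box i) (box j) in *. rewrite Hsame in *.
  apply Rmult_lt_reg_l with (INR K); auto. rewrite Rinv_r by lra.
  rewrite <- (Rabs_right (INR K)) at 1 by lra. rewrite <- Rabs_mult.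
  apply Rabs_def1; nra.
Qed.

Lemma dirichlet_approx (a : R) (K : nat) : ~ is_rational a -> (0 < K)%nat ->
  exists (n : nat) (M : Z), (1 <= n)%nat /\ 0 < Rabs (INR n * a - IZR M) < / INR K.
Proof.
  intros Hirr HK.
  destruct (pigeonhole_unit_interval (fun i => frac_part (INR i * a)) K HK)
    as [i [j [Hij Hclose]]].
  { intro i. unfold frac_part. destruct (Int_part_bounds (INR i * a)). lra. }
  set (M := (Int_part (INR j * a) - Int_part (INR i * a))%Z).
  assert (Hdiff : INR (j - i) * a - IZR M
                  = frac_part (INR j * a) - frac_part (INR i * a)).
  { unfold M, frac_part. rewrite minus_INR by lia. rewrite minus_IZR. ring. }
  exists (j - i)%nat, M. rewrite Hdiff. repeat split; [lia | | exact Hclose].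
  apply Rabs_pos_lt. intro Hzero. apply Hirr.
  exists M, (Z.of_nat (j - i)). split; [lia |].
  rewrite <- INR_IZR_INZ.
  assert (Hnz : INR (j - i) <> 0) by (apply not_0_INR; lia).
  field_simplify_eq; [| exact Hnz]. lra.
Qed.

Lemma multiples_approximate (d t : R) : d <> 0 -> Rabs d < 1 ->
  exists k m : Z, (1 <= k)%Z /\ Rabs (IZR k * d - t - IZR m) < Rabs d.
Proof.
  intros Hd0 Hd1. destruct (Int_part_bounds t) as [Htlo Hthi].
  (* shift t by an integer so that it lies beyond d, on the side of d *)
  assert (Hshift : exists m : Z, 1 < (t + IZR m) / d).
  { destruct (Rlt_or_le 0 d) as [Hpos | Hneg].
    - rewrite Rabs_right in Hd1 by lra.
      exists (1 - Int_part t)%Z. rewrite minus_IZR.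
      apply Rmult_lt_reg_r with d; [lra |]. field_simplify; lra.
    - assert (Hneg' : d < 0) by lra. rewrite Rabs_left1 in Hd1 by lra.
      exists (- 2 - Int_part t)%Z. rewrite minus_IZR.
      apply Rmult_lt_reg_r with (- d); [lra |].
      replace ((t + (IZR (-2) - IZR (Int_part t))) / d * - d)
        with (- (t + (IZR (-2) - IZR (Int_part t)))) by (field; lra).
      simpl (IZR (-2)). lra. }
  destruct Hshift as [m Hm]. set (T := t + IZR m) in Hm.
  destruct (Int_part_bounds (T / d)) as [Hlo Hhi].
  exists (Int_part (T / d)), m. split.
  - assert (0 < Int_part (T / d))%Z by (apply lt_IZR; simpl; lra). lia.
  - replace (IZR (Int_part (T / d)) * d - t - IZR m)
      with ((IZR (Int_part (T / d)) - T / d) * d) by (unfold T; field; auto).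
    rewrite Rabs_mult. pose proof (Rabs_pos_lt d Hd0).
    assert (Rabs (IZR (Int_part (T / d)) - T / d) < 1) by (apply Rabs_def1; lra).
    nra.
Qed.

Lemma irrational_rotation_dense (a x y eps : R) : ~ is_rational a -> 0 < eps ->
  exists n : nat, (1 <= n)%nat /\ cdist (x + INR n * a) y < eps.
Proof.
  intros Hirr Heps. set (e := Rmin eps 1).
  assert (He0 : 0 < e) by (unfold e; apply Rmin_glb_lt; lra).
  assert (He1 : e <= 1) by apply Rmin_r. assert (He2 : e <= eps) by apply Rmin_l.
  destruct (archimed_cor1 e He0) as [K [HKe HK]].
  destruct (dirichlet_approx a K Hirr HK) as [n [M [Hn [Hd0 Hd]]]].
  set (d := INR n * a - IZR M) in *.
  assert (Hdne : d <> 0) by (intro H0; rewrite H0, Rabs_R0 in Hd0; lra).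
  destruct (multiples_approximate d (y - x) Hdne ltac:(lra)) as [k [m [Hk Happrox]]].
  exists (n * Z.to_nat k)%nat. split; [nia |].
  eapply Rle_lt_trans; [apply (cdist_le_lift _ _ (k * M + m)) |].
  rewrite mult_INR, (INR_IZR_INZ (Z.to_nat k)), Z2Nat.id by lia.
  replace (x + INR n * IZR k * a - y - IZR (k * M + m))
    with (IZR k * d - (y - x) - IZR m)
    by (unfold d; rewrite plus_IZR, mult_IZR; ring).
  lra.
Qed.

Lemma word_apply_ones (a b : R) (n : nat) (x : R) :
  word_apply (fam a b) (repeat one n) x = x + INR n * a.
Proof.
  induction n as [| n IHn]; simpl repeat; [simpl; ring |].
  simpl word_apply. rewrite IHn. unfold rot. rewrite S_INR. ring.
Qed.

(* Part (1): already the powers of f_1 have dense orbits. *)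
Lemma IFS_minimal_of_irrational (a b : R) :
  ~ is_rational a -> IFS_minimal (fam a b).
Proof.
  intros Hirr x y eps Heps.
  destruct (irrational_rotation_dense a x y eps Hirr Heps) as [n [Hn Hclose]].
  exists (x + INR n * a). split; [| exact Hclose].
  exists (repeat one n). split.
  - destruct n; [lia | discriminate].
  - symmetry. apply word_apply_ones.
Qed.

Theorem mainTheorem19 (alpha beta : R) :
  ~ is_rational alpha -> ~ is_rational beta -> is_rational (beta - alpha) ->
  IFS_minimal (fam alpha beta) /\
  ~ strict_attractor (fam alpha beta) /\
  (forall nu : R, 0 < nu < 1 -> ~ uu_minimal nu alpha beta).
Proof.
  intros Halpha _ Hrat. split; [| split].
  - exact (IFS_minimal_of_irrational alpha beta Halpha).
  - exact (not_strict_attractor alpha beta Hrat).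
  - exact (not_uu_minimal alpha beta Hrat).
Qed.
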